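(* Let $X$ be an algebraic variety, $t\in\mathcal{T}(X)$ and $s\in\mathcal{S}(X)$. Then $t\cdot s\in\mathcal{S}(X)$.
   Context: An affine algebraic variety is a topological space with a sheaf of real-valued functions isomorphic as a ringed space (via a ''closed embedding'' $i$) to an algebraic set $Y\subset\mathbb{R}^n$ (common zero locus of real polynomials) with its Zariski topology and sheaf of regular functions. An algebraic variety is a topological space with a sheaf of real-valued functions admitting a finite open cover by affine algebraic varieties. For affine $X$: $\mathcal{S}(X)$ is the space of $f$ such that $f\circ i^{-1}$ is the restriction to $i(X)$ of a classical Schwartz function on $\mathbb{R}^n$; $\mathcal{T}(X)$ is the space of $f$ such that $f\circ i^{-1}$ is the restriction of a tempered function on $\mathbb{R}^n$ (a smooth function all of whose partial derivatives are bounded by $C(1+|x|^2)^N$ for some $C,N$); both are independent of $i$. For a general algebraic variety $X$ with a finite affine open cover $X=\bigcup_{i=1}^kX_i$: $\mathcal{S}(X)$ is the set of functions $\sum_{i=1}^k\mathrm{Ext}_{X_i}^X(s_i)$, $s_i\in\mathcal{S}(X_i)$, $\mathrm{Ext}$ = extension by zero (independent of the cover); $\mathcal{T}(X)$ is the set of $t:X\to\mathbb{R}$ with $t|_{X_i}\in\mathcal{T}(X_i)$ for all $i$ (for some, equivalently every, finite affine open cover). *)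

From HB Require Import structures.
From mathcomp Require Import all_boot all_order all_algebra.
From mathcomp Require Import all_classical all_reals all_analysis.
Set Implicit Arguments. Unset Strict Implicit. Unset Printing Implicit Defensive.
Import Order.TTheory GRing.Theory Num.Theory.
Import numFieldNormedType.Exports.
Local Open Scope classical_set_scope.
Local Open Scope ring_scope.

Section Defs.
Variable R : realType.

Definition iterD (n : nat) (l : seq 'I_n) (f : 'rV[R]_n -> R) : 'rV[R]_n -> R :=
  foldr (fun j g => 'D_(delta_mx 0 j) g) f l.

Definition smooth (n : nat) (f : 'rV[R]_n -> R) : Prop :=
  forall l : seq 'I_n, continuous (iterD l f) /\
    forall (j : 'I_n) (x : 'rV[R]_n), derivable (iterD l f) x (delta_mx 0 j).

Definition sqn (n : nat) (x : 'rV[R]_n) : R := \sum_(j < n) x ord0 j ^+ 2.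

Definition schwartz (n : nat) (f : 'rV[R]_n -> R) : Prop :=
  smooth f /\ forall (l : seq 'I_n) (N : nat), exists C : R,
    forall x, (1 + sqn x) ^+ N * `|iterD l f x| <= C.

Definition tempered (n : nat) (f : 'rV[R]_n -> R) : Prop :=
  smooth f /\ forall l : seq 'I_n, exists (C : R) (N : nat),
    forall x, `|iterD l f x| <= C * (1 + sqn x) ^+ N.

Inductive polyfun (n : nat) : ('rV[R]_n -> R) -> Prop :=
| pf_const (c : R) : polyfun (fun _ => c)
| pf_coord (j : 'I_n) : polyfun (fun x => x ord0 j)
| pf_add f g : polyfun f -> polyfun g -> polyfun (fun x => f x + g x)
| pf_mul f g : polyfun f -> polyfun g -> polyfun (fun x => f x * g x).

Definition algebraic_set (n : nat) (Y : set 'rV[R]_n) : Prop :=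
  exists P : set ('rV[R]_n -> R), (forall p, P p -> polyfun p) /\
    Y = [set x | forall p, P p -> p x = 0].

Definition zariski_open_in (n : nat) (Y V : set 'rV[R]_n) : Prop :=
  exists Z, algebraic_set Z /\ V = Y `\` Z.

Definition regular_on (n : nat) (Y V : set 'rV[R]_n) (g : 'rV[R]_n -> R) : Prop :=
  forall y, V y -> exists p q Wz, [/\ polyfun p /\ polyfun q, zariski_open_in Y Wz,
    Wz y, (Wz `<=` V) & forall z, Wz z -> q z != 0 /\ g z = p z / q z].

(* O U = the functions (given as functions on X; only values on U matter)
   that are sections of the structure sheaf over the open U *)
Definition sheaf_of_functions (X : topologicalType) (O : set X -> set (X -> R)) : Prop :=
  (forall U f g, open U -> (forall x, U x -> f x = g x) -> O U f -> O U g) /\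
  (forall U f, open U ->
     (O U f <-> forall x, U x -> exists Wx, [/\ open Wx, Wx x, (Wx `<=` U) & O Wx f])).

Record chart (X : topologicalType) := Chart {
  ch_U : set X;
  ch_n : nat;
  ch_Y : set 'rV[R]_ch_n;
  ch_i : X -> 'rV[R]_ch_n }.
Arguments ch_U {X} c _.
Arguments ch_n {X} c.
Arguments ch_Y {X} c _.
Arguments ch_i {X} c _.

(* (U, O|_U) is isomorphic as a ringed space, via i, to the algebraic set Y
   with its Zariski topology and sheaf of regular functions *)
Definition affine_chart (X : topologicalType) (O : set X -> set (X -> R))
    (c : chart X) : Prop :=
  [/\ open (ch_U c) /\ algebraic_set (ch_Y c),
      (forall x y, ch_U c x -> ch_U c y -> ch_i c x = ch_i c y -> x = y),
      ch_i c @` ch_U c = ch_Y c,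
      (forall V, V `<=` ch_U c -> (open V <-> zariski_open_in (ch_Y c) (ch_i c @` V)))
    & (forall V g, V `<=` ch_U c -> open V ->
         (regular_on (ch_Y c) (ch_i c @` V) g <-> O V (g \o ch_i c)))].

Definition affine_cover (X : topologicalType) (O : set X -> set (X -> R))
    (k : nat) (cs : 'I_k -> chart X) : Prop :=
  (forall j, affine_chart O (cs j)) /\ (forall x, exists j, ch_U (cs j) x).

Definition algebraic_variety (X : topologicalType) (O : set X -> set (X -> R)) : Prop :=
  sheaf_of_functions O /\ exists k (cs : 'I_k -> chart X), affine_cover O cs.

Definition schwartz_chart (X : topologicalType) (c : chart X) (f : X -> R) : Prop :=
  exists phi, schwartz phi /\ forall x, ch_U c x -> f x = phi (ch_i c x).

Definition tempered_chart (X : topologicalType) (c : chart X) (f : X -> R) : Prop :=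
  exists phi, tempered phi /\ forall x, ch_U c x -> f x = phi (ch_i c x).

Definition ext_zero (X : Type) (U : set X) (f : X -> R) : X -> R :=
  fun x => if `[< U x >] then f x else 0.

Definition Schwartz_space (X : topologicalType) (O : set X -> set (X -> R))
    (f : X -> R) : Prop :=
  exists k (cs : 'I_k -> chart X) (s : 'I_k -> X -> R),
    [/\ affine_cover O cs, (forall j, schwartz_chart (cs j) (s j))
      & f = fun x => \sum_(j < k) ext_zero (ch_U (cs j)) (s j) x].

(* T(X) (the "every finite affine open cover" reading) *)
Definition Tempered_space (X : topologicalType) (O : set X -> set (X -> R))
    (t : X -> R) : Prop :=
  forall k (cs : 'I_k -> chart X), affine_cover O cs ->
    forall j, tempered_chart (cs j) t.

End Defs.

From Pilot Require Import Defs.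
From HB Require Import structures.
From mathcomp Require Import all_boot all_order all_algebra.
From mathcomp Require Import all_classical all_reals all_analysis.
Set Implicit Arguments. Unset Strict Implicit. Unset Printing Implicit Defensive.
Import Order.TTheory GRing.Theory Num.Theory.
Import numFieldNormedType.Exports.
Local Open Scope classical_set_scope.
Local Open Scope ring_scope.

(* By the Leibniz rule every partial derivative of a product is a finite sum
   of products of partial derivatives of the factors.  For a tempered factor
   and a Schwartz factor each such product is polynomially bounded times
   rapidly decreasing, hence rapidly decreasing: tempered times Schwartz is
   Schwartz on R^n.  On X, write s as a sum of extensions by zero of chart
   Schwartz functions s_i; then t s is the sum of the extensions by zero of
   the t s_i, and each t s_i is Schwartz on its chart because t is tempered
   there. *)

Section Leibniz.
Variable R : realType.

Lemma is_derive_big_sum (V W : normedModType R) (I : Type) (r : seq I)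
    (h : I -> V -> W) (dh : I -> W) (x v : V) :
  (forall i, is_derive x v (h i) (dh i)) ->
  is_derive x v (fun y => \sum_(i <- r) h i y) (\sum_(i <- r) dh i).
Proof.
rewrite -fct_sumE => dhx.
by elim/big_ind2 : _ => // *; [exact: is_derive_cst | exact: is_deriveD].
Qed.

Section SmoothProduct.
Variables (n : nat) (f g : 'rV[R]_n -> R).
Hypotheses (sf : smooth f) (sg : smooth g).

Lemma is_derive_iterD_mul (l m : seq 'I_n) (j : 'I_n) (x : 'rV[R]_n) :
  let e := delta_mx 0 j in
  is_derive x e (fun y => Defs.iterD l f y * Defs.iterD m g y)
    (Defs.iterD l f x *: 'D_e (Defs.iterD m g) x +
     Defs.iterD m g x *: 'D_e (Defs.iterD l f) x).
Proof.
by apply: is_deriveM; apply: derivableP; [exact: (sf l).2 | exact: (sg m).2].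
Qed.

Lemma iterD_mul_expansion (l : seq 'I_n) :
  exists L : seq (seq 'I_n * seq 'I_n),
    Defs.iterD l (fun x => f x * g x) =
      fun x => \sum_(p <- L) Defs.iterD p.1 f x * Defs.iterD p.2 g x.
Proof.
elim: l => [|j l [L IH]].
  by exists [:: ([::], [::])]; apply/funext => x; rewrite big_seq1.
exists ([seq (j :: p.1, p.2) | p <- L] ++ [seq (p.1, j :: p.2) | p <- L]).
apply/funext => x; rewrite /= -/(Defs.iterD l _) IH.
have dsum := is_derive_big_sum L (fun p => is_derive_iterD_mul p.1 p.2 j x).
rewrite derive_val big_cat !big_map /= -big_split /=.
by apply: eq_bigr => p _; rewrite addrC /GRing.scale /= [_ * Defs.iterD p.2 g x]mulrC.
Qed.

Lemma smooth_mul : smooth (fun x => f x * g x).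
Proof.
move=> l; have [L ->] := iterD_mul_expansion l; split.
  have cterm p : continuous (fun x => Defs.iterD p.1 f x * Defs.iterD p.2 g x).
    by move=> x; apply: continuousM; [exact: (sf p.1).1 | exact: (sg p.2).1].
  exact: (@continuous_big R^o _ +%R 0 xpredT (@add_continuous R^o) _ L _
    (fun p _ => cterm p)).
move=> j x; apply: ex_derive.
exact: is_derive_big_sum (fun p => is_derive_iterD_mul p.1 p.2 j x).
Qed.

End SmoothProduct.

End Leibniz.

Section Bounds.
Variables (R : realType) (T : Type).

Lemma weighted_bound_big_sum (I : Type) (r : seq I) (F : I -> T -> R)
    (w : T -> R) :
  (forall x, 0 <= w x) -> (forall i, exists C, forall x, w x * `|F i x| <= C) ->
  exists C, forall x, w x * `|\sum_(i <- r) F i x| <= C.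
Proof.
move=> w_ge0 bF; elim: r => [|i r [C2 IH]].
  by exists 0 => x; rewrite big_nil normr0 mulr0.
have [C1 bFi] := bF i; exists (C1 + C2) => x; rewrite big_cons.
apply: le_trans (_ : w x * (`|F i x| + `|\sum_(j <- r) F j x|) <= _).
  by apply: ler_wpM2l => //; exact: ler_normD.
by rewrite mulrDr; exact: lerD.
Qed.

Lemma polynomial_growth_mul_rapid_decay (s a b : T -> R) (C1 : R) (N1 : nat) :
  (forall x, 0 <= s x) -> (forall x, `|a x| <= C1 * s x ^+ N1) ->
  (forall M, exists C, forall x, s x ^+ M * `|b x| <= C) ->
  forall N, exists C, forall x, s x ^+ N * `|a x * b x| <= C.
Proof.
move=> s_ge0 ba bb N; have [C2 bb'] := bb (N + N1)%N.
exists (`|C1| * C2) => x.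
have ba' : `|a x| <= `|C1| * s x ^+ N1.
  by apply: le_trans (ba x) _; apply: ler_wpM2r; [exact: exprn_ge0 | exact: ler_norm].
apply: le_trans (_ : s x ^+ N * (`|C1| * s x ^+ N1) * `|b x| <= _).
  by rewrite normrM mulrA; apply: ler_wpM2r => //; apply: ler_wpM2l => //; exact: exprn_ge0.
have -> : s x ^+ N * (`|C1| * s x ^+ N1) * `|b x| =
    `|C1| * (s x ^+ (N + N1) * `|b x|) by rewrite exprD mulrCA !mulrA.
by apply: ler_wpM2l.
Qed.

End Bounds.

Section Schwartz.
Variable R : realType.

Lemma sqn_ge0 n (x : 'rV[R]_n) : 0 <= sqn x.
Proof. by apply: sumr_ge0 => j _; exact: sqr_ge0. Qed.

Lemma schwartz_temperedM n (f g : 'rV[R]_n -> R) : tempered f -> schwartz g ->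
  schwartz (fun x => f x * g x).
Proof.
move=> [sf tf] [sg rg]; split; first exact: smooth_mul.
move=> l N; have [L ->] := iterD_mul_expansion sf sg l.
have weight_ge0 (x : 'rV[R]_n) : 0 <= 1 + sqn x by rewrite addr_ge0 ?sqn_ge0.
apply: weighted_bound_big_sum => [x|p]; first exact: exprn_ge0.
have [C1 [N1 bf]] := tf p.1.
exact: polynomial_growth_mul_rapid_decay weight_ge0 bf (rg p.2) N.
Qed.

Lemma schwartz_chart_temperedM (X : topologicalType) (c : chart R X)
    (t s : X -> R) :
  tempered_chart c t -> schwartz_chart c s ->
  schwartz_chart c (fun x => t x * s x).
Proof.
move=> [phi [tphi Et]] [psi [spsi Es]].
exists (fun y => phi y * psi y); split; first exact: schwartz_temperedM.
by move=> x Ux; rewrite Et // Es.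
Qed.

Lemma mul_ext_zero (T : Type) (U : set T) (t s : T -> R) (x : T) :
  t x * ext_zero U s x = ext_zero U (fun y => t y * s y) x.
Proof. by rewrite /ext_zero; case: ifP => _ //; rewrite mulr0. Qed.

End Schwartz.

Theorem proposition5p6 (R : realType) (X : topologicalType)
    (O : set X -> set (X -> R)) (HX : algebraic_variety O)
    (t s : X -> R) :
  Tempered_space O t -> Schwartz_space O s ->
  Schwartz_space O (fun x => t x * s x).
Proof.
move=> tT [k [cs [si [cover si_schwartz ->]]]].
exists k, cs, (fun j x => t x * si j x); split => //.
  by move=> j; exact: schwartz_chart_temperedM (tT k cs cover j) (si_schwartz j).
by apply/funext => x; rewrite mulr_sumr; apply: eq_bigr => j _; exact: mul_ext_zero.
Qed.
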